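(* Let $f:\mathbb{R}^N\to\mathbb{R}_{++}\cup\{\infty\}$ be a standard interference function and let $f_\infty:\mathbb{R}^N\to\mathbb{R}\cup\{\infty\}$ be its asymptotic function. Then: (i) For every $\mathbf{x}\in\mathbb{R}_+^N$, $f_\infty(\mathbf{x})=\lim_{h\to\infty}f(h\mathbf{x})/h\in\mathbb{R}_+$. (ii) $f_\infty$ is lower semicontinuous and positively homogeneous. If, in addition, $f$ is continuous when restricted to $\mathbb{R}_+^N$, then $f_\infty$ is continuous when restricted to $\mathbb{R}_+^N$. (iii) For all $\mathbf{x}_1,\mathbf{x}_2\in\mathbb{R}_+^N$, $\mathbf{x}_1\ge\mathbf{x}_2$ implies $f_\infty(\mathbf{x}_2)\le f_\infty(\mathbf{x}_1)$. (iv) If $f$ is continuous when restricted to $\mathbb{R}_+^N$, then for every $\mathbf{x}\in\mathbb{R}_+^N$ and all sequences $(\mathbf{x}_n)_{n\in\mathbb{N}}\subset\mathbb{R}_+^N$ and $(h_n)_{n\in\mathbb{N}}\subset\mathbb{R}_{++}$ with $\mathbf{x}_n\to\mathbf{x}$ and $h_n\to\infty$, we have $f_\infty(\mathbf{x})=\lim_{n\to\infty}f(h_n\mathbf{x}_n)/h_n$. (v) If $f$ is concave when restricted to $\mathbb{R}_+^N$, then $f_\infty$ is concave when restricted to $\mathbb{R}_+^N$.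
   Context: Vector inequalities are coordinatewise; $\mathbb{R}_+$, $\mathbb{R}_{++}$ denote nonnegative and positive reals. A function $f:\mathbb{R}^N\to\mathbb{R}_{++}\cup\{\infty\}$ is a standard interference function if: (1) for all $\mathbf{x}\in\mathbb{R}_+^N$ and all $\alpha>1$, $\alpha f(\mathbf{x})>f(\alpha\mathbf{x})$; (2) for all $\mathbf{x}_1,\mathbf{x}_2\in\mathbb{R}_+^N$, $\mathbf{x}_1\ge\mathbf{x}_2$ implies $f(\mathbf{x}_1)\ge f(\mathbf{x}_2)$; (3) $f(\mathbf{x})=\infty$ iff $\mathbf{x}\notin\mathbb{R}_+^N$. For a proper function $f:\mathbb{R}^N\to\mathbb{R}\cup\{\infty\}$ (i.e., finite somewhere), its asymptotic function is $f_\infty(\mathbf{x})=\inf\{\liminf_{n\to\infty} f(h_n\mathbf{x}_n)/h_n : (h_n)\subset\mathbb{R},\ h_n\to\infty,\ (\mathbf{x}_n)\subset\mathbb{R}^N,\ \mathbf{x}_n\to\mathbf{x}\}$, equivalently $f_\infty(\mathbf{x})=\liminf_{h\to\infty,\mathbf{y}\to\mathbf{x}} f(h\mathbf{y})/h$. Continuity (resp. concavity) ''when restricted to $\mathbb{R}_+^N$'' refers to the restriction of the function to $\mathbb{R}_+^N$. *)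

From HB Require Import structures.
From mathcomp Require Import all_boot all_order all_algebra.
From mathcomp Require Import all_classical all_reals all_analysis.
Set Implicit Arguments. Unset Strict Implicit. Unset Printing Implicit Defensive.
Import Order.TTheory GRing.Theory Num.Theory.
Import numFieldNormedType.Exports.
Local Open Scope classical_set_scope.
Local Open Scope ring_scope.

Definition nonnegv {R : realType} {N : nat} (x : 'rV[R]_N) : Prop :=
  forall i : 'I_N, 0 <= x ord0 i.

Definition orthant (R : realType) (N : nat) : set 'rV[R]_N := [set x | nonnegv x].

Definition vle {R : realType} {N : nat} (x2 x1 : 'rV[R]_N) : Prop :=
  forall i : 'I_N, x2 ord0 i <= x1 ord0 i.

Local Open Scope ereal_scope.

Definition standard_interference {R : realType} {N : nat}
    (f : 'rV[R]_N -> \bar R) : Prop :=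
  (forall x, 0 < f x) /\
  (forall x, nonnegv x -> forall alpha : R, (1 < alpha)%R ->
       f (alpha *: x) < alpha%:E * f x) /\
  (forall x1 x2, nonnegv x1 -> nonnegv x2 -> vle x2 x1 -> f x2 <= f x1) /\
  (forall x, f x = +oo <-> ~ nonnegv x).

Definition asymptotic_fun {R : realType} {N : nat}
    (f : 'rV[R]_N -> \bar R) (x : 'rV[R]_N) : \bar R :=
  ereal_inf [set l | exists (h : nat -> R) (xs : nat -> 'rV[R]_N),
     [/\ h @ \oo --> +oo%R, xs @ \oo --> x &
         l = limn_einf (fun n => f (h n *: xs n) * ((h n)^-1)%:E)]].

Definition pos_homogeneous {R : realType} {N : nat}
    (g : 'rV[R]_N -> \bar R) : Prop :=
  forall x (lam : R), (0 < lam)%R -> g (lam *: x) = lam%:E * g x.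

Definition concave_on_orthant {R : realType} {N : nat}
    (g : 'rV[R]_N -> \bar R) : Prop :=
  forall x y, nonnegv x -> nonnegv y -> forall t : R, (0 <= t <= 1)%R ->
    t%:E * g x + (1 - t)%:E * g y <= g (t *: x + (1 - t) *: y)%R.

From HB Require Import structures.
From mathcomp Require Import all_boot all_order all_algebra.
From mathcomp Require Import all_classical all_reals all_analysis.
From mathcomp Require Import ring lra.
Import Order.TTheory GRing.Theory Num.Theory.
Import numFieldNormedType.Exports.
Local Open Scope classical_set_scope.
Local Open Scope ring_scope.

(* On the orthant, scalability makes h |-> f(h x)/h nonincreasing, so along
   each ray it converges to its infimum, the slope s(x) >= 0; s inherits
   monotonicity from f and is positively homogeneous.  Every y near x in the
   orthant dominates r x for a given r < 1, hence f(h y)/h >= s(y) >= r s(x);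
   this lower bound holds uniformly along any admissible sequences and
   identifies f_oo with s on the orthant, while off the closed orthant f and
   f_oo are +oo.  When f is continuous, a single large h with
   f(h x)/h < s(x) + e keeps f(h y)/h < s(x) + e for y near x, and
   monotonicity in h extends this to all larger h: this gives continuity and
   the sequential limit.  Concavity passes to the ratios, then to the
   infimum. *)

Lemma nonnegvZ {R : realType} {N : nat} {h : R} {x : 'rV[R]_N} :
  0 <= h -> nonnegv x -> nonnegv (h *: x).
Proof. by move=> h0 hx i; rewrite mxE mulr_ge0. Qed.

Lemma not_nonnegvZ {R : realType} {N : nat} {h : R} {y : 'rV[R]_N} :
  0 < h -> ~ nonnegv y -> ~ nonnegv (h *: y).
Proof. by move=> h0 ny hy; apply: ny => i; have := hy i; rewrite mxE pmulr_rge0. Qed.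

Lemma near_not_nonnegv {R : realType} {N : nat} {x : 'rV[R]_N} :
  ~ nonnegv x -> \forall y \near x, ~ nonnegv y.
Proof.
move=> /existsNP[i /negP]; rewrite -ltNge => xi.
near=> y => /(_ i); apply/negP; rewrite -ltNge; near: y.
exact: (@coord_continuous R 1 N ord0 i x _ (lt_nbhsl xi)).
Unshelve. all: by end_near.
Qed.

Lemma near_scale_vle {R : realType} {N : nat} {x : 'rV[R]_N} {r : R} :
  nonnegv x -> r < 1 -> \forall y \near x, nonnegv y -> vle (r *: x) y.
Proof.
move=> hx r1.
suff /filter_forall : forall i, \forall y \near x, nonnegv y -> r * x ord0 i <= y ord0 i.
  by apply: filterS => y near_coord hy i; rewrite mxE near_coord.
move=> i; have := hx i; rewrite le_eqVlt => /predU1P[<-|xi0].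
  by near=> y => /(_ i); rewrite mulr0.
have rx : r * x ord0 i < x ord0 i by rewrite gtr_pMl.
near=> y => _; apply: ltW; near: y.
exact: (@coord_continuous R 1 N ord0 i x _ (lt_nbhsr rx)).
Unshelve. all: by end_near.
Qed.

Lemma exists_lt1_mul {R : realFieldType} {a L : R} :
  0 <= L -> a < L -> exists2 r, 0 < r < 1 & a < r * L.
Proof.
move=> L0 aL; have [a0|a0] := ltP a 0.
  by exists 2^-1; [apply/andP; split; lra | apply: lt_le_trans a0 _; rewrite mulr_ge0].
have L_gt0 : 0 < L by apply: le_lt_trans aL.
exists ((a + L) / (2 * L)).
  by apply/andP; split; [rewrite divr_gt0 ?mulr_gt0 //; lra | rewrite ltr_pdivrMr ?mulr_gt0 //; lra].
have -> : (a + L) / (2 * L) * L = (a + L) / 2 by field; rewrite gt_eqF.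
lra.
Qed.

Lemma limn_einf_ge_near {R : realType} (u : nat -> \bar R) (a : \bar R) :
  (\forall n \near \oo, a <= u n)%E -> (a <= limn_einf u)%E.
Proof.
move=> [M _ uM]; rewrite limn_einf_lim; apply: lime_ge; first exact: is_cvg_einfs.
near=> n; apply: le_ereal_inf_tmp => _ [k /= nk <-]; apply: uM.
by apply: leq_trans nk; near: n; exists M.
Unshelve. all: by end_near.
Qed.

Section StandardInterference.
Context {R : realType} {N : nat} (f : 'rV[R]_N -> \bar R).
Hypothesis f_si : standard_interference f.

Definition fr (x : 'rV[R]_N) : R := fine (f x).

Definition ray_slope (x : 'rV[R]_N) : R :=
  inf [set fr (h *: x) / h | h in [set h : R | 0 < h]].

Lemma fE x : nonnegv x -> f x = (fr x)%:E.
Proof.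
have [f_gt0 [_ [_ f_oo]]] := f_si; move=> hx; rewrite /fr.
have : f x <> +oo%E by move/f_oo.
by have := f_gt0 x; case: (f x).
Qed.

Lemma fr_gt0 x : nonnegv x -> 0 < fr x.
Proof. by move=> hx; have := f_si.1 x; rewrite fE // lte_fin. Qed.

Lemma f_not_nonnegv x : ~ nonnegv x -> f x = +oo%E.
Proof. by move=> nx; apply/f_si.2.2.2. Qed.

Lemma frZ_lt {x a} : nonnegv x -> 1 < a -> fr (a *: x) < a * fr x.
Proof.
move=> hx a1; have := f_si.2.1 x hx a a1.
by rewrite !fE ?lte_fin //; apply: nonnegvZ (ltW (lt_trans ltr01 a1)) hx.
Qed.

Lemma fr_le x1 x2 : nonnegv x1 -> nonnegv x2 -> vle x2 x1 -> fr x2 <= fr x1.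
Proof. by move=> h1 h2 le21; have := f_si.2.2.1 x1 x2 h1 h2 le21; rewrite !fE. Qed.

Lemma fr_ratio_gt0 {x h} : nonnegv x -> 0 < h -> 0 < fr (h *: x) / h.
Proof. by move=> hx h0; rewrite divr_gt0 // fr_gt0 //; apply: nonnegvZ (ltW h0) hx. Qed.

(* The scalability axiom, applied at [h x] with [alpha = h' / h]. *)
Lemma fr_ratio_nonincreasing {x h h'} : nonnegv x -> 0 < h -> h <= h' ->
  fr (h' *: x) / h' <= fr (h *: x) / h.
Proof.
move=> hx h0; rewrite le_eqVlt => /predU1P[<-//|hh'].
have h'0 : 0 < h' by apply: lt_trans hh'.
have a1 : 1 < h' / h by rewrite ltr_pdivlMr // mul1r.
have := frZ_lt (nonnegvZ (ltW h0) hx) a1.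
rewrite scalerA mulrVK ?unitfE ?gt_eqF // => lt.
rewrite ler_pdivrMr // mulrAC ler_pdivlMr //; apply: ltW.
by rewrite -ltr_pdivlMr // -mulrA mulrC.
Qed.

Lemma has_inf_fr_ratio {x} : nonnegv x ->
  has_inf [set fr (h *: x) / h | h in [set h : R | 0 < h]].
Proof.
move=> hx; split; first by exists (fr (1 *: x) / 1), 1 => //=.
by exists 0 => _ [h /= h0 <-]; apply/ltW/fr_ratio_gt0.
Qed.

Lemma ray_slope_le {x h} : nonnegv x -> 0 < h -> ray_slope x <= fr (h *: x) / h.
Proof. by move=> hx h0; apply: ge_inf; [case: (has_inf_fr_ratio hx) | exists h]. Qed.

Lemma ray_slope_ge x a : nonnegv x ->
  (forall h, 0 < h -> a <= fr (h *: x) / h) -> a <= ray_slope x.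
Proof.
move=> hx ge_a; apply: lb_le_inf; first by case: (has_inf_fr_ratio hx).
by move=> _ [h /= h0 <-]; apply: ge_a.
Qed.

Lemma ray_slope_ge0 {x} : nonnegv x -> 0 <= ray_slope x.
Proof. by move=> hx; apply: ray_slope_ge => // h h0; apply/ltW/fr_ratio_gt0. Qed.

Lemma ray_slope_approx {x e} : nonnegv x -> 0 < e ->
  exists2 H, 0 < H & forall h, H <= h -> fr (h *: x) / h < ray_slope x + e.
Proof.
move=> hx e0; have [_ [H /= H0 <-] lt] := inf_adherent e0 (has_inf_fr_ratio hx).
by exists H => // h Hh; apply: le_lt_trans lt; apply: fr_ratio_nonincreasing.
Qed.

Lemma ray_slope_le_vle x1 x2 : nonnegv x1 -> nonnegv x2 -> vle x2 x1 ->
  ray_slope x2 <= ray_slope x1.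
Proof.
move=> h1 h2 le21; apply: ray_slope_ge => // h h0.
apply: le_trans (ray_slope_le h2 h0) _; rewrite ler_pM2r ?invr_gt0 //.
apply: fr_le; [exact: nonnegvZ (ltW h0) h1 | exact: nonnegvZ (ltW h0) h2 |].
by move=> i; rewrite !mxE ler_pM2l.
Qed.

Lemma ray_slopeZ_ge {x c} : nonnegv x -> 0 < c -> c * ray_slope x <= ray_slope (c *: x).
Proof.
move=> hx c0; apply: ray_slope_ge => [|h h0]; first exact: nonnegvZ (ltW c0) hx.
have -> : fr (h *: (c *: x)) / h = c * (fr ((h * c) *: x) / (h * c)).
  by rewrite scalerA; field; rewrite !gt_eqF.
by rewrite ler_pM2l // ray_slope_le // mulr_gt0.
Qed.

Lemma ray_slopeZ {x c} : nonnegv x -> 0 < c -> ray_slope (c *: x) = c * ray_slope x.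
Proof.
move=> hx c0; apply/eqP; rewrite eq_le ray_slopeZ_ge // andbT.
have /(ray_slopeZ_ge (nonnegvZ (ltW c0) hx)) : 0 < c^-1 by rewrite invr_gt0.
by rewrite scalerA mulVf ?gt_eqF // scale1r ler_pdivrMl.
Qed.

Lemma ratioE {y h} : nonnegv y -> 0 < h ->
  (f (h *: y) * (h^-1)%:E)%E = (fr (h *: y) / h)%:E.
Proof. by move=> hy h0; rewrite fE ?EFinM //; apply: nonnegvZ (ltW h0) hy. Qed.

Lemma ratio_not_nonnegv {y h} : ~ nonnegv y -> 0 < h ->
  (f (h *: y) * (h^-1)%:E)%E = +oo%E.
Proof.
move=> ny h0; rewrite f_not_nonnegv; last exact: not_nonnegvZ h0 ny.
by rewrite gt0_mulye // lte_fin invr_gt0.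
Qed.

Lemma cvg_ray_ratio {x} : nonnegv x ->
  (fun h : R => (f (h *: x) * (h^-1)%:E)%E) @ +oo --> (ray_slope x)%:E.
Proof.
move=> hx; apply/fine_cvgP; split.
  by near=> h; rewrite ratioE //; near: h; apply: nbhs_pinfty_gt.
apply/cvgrPdist_lt => e e0; have [H H0 ratio_lt] := ray_slope_approx hx e0.
near=> h; have h0 : 0 < h by near: h; apply: nbhs_pinfty_gt.
have Hh : H <= h by near: h; apply: nbhs_pinfty_ge; apply: num_real.
have := ray_slope_le hx h0; have := ratio_lt _ Hh.
by rewrite /= ratioE //= ltr_distl => ? ?; apply/andP; split; lra.
Unshelve. all: by end_near.
Qed.

Lemma ray_slope_scale_le_near {x r} : nonnegv x -> 0 < r < 1 ->
  \forall y \near x, nonnegv y -> r * ray_slope x <= ray_slope y.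
Proof.
move=> hx /andP[r0 r1]; apply: filterS (near_scale_vle hx r1) => y rx_le_y hy.
rewrite -ray_slopeZ //; apply: ray_slope_le_vle (rx_le_y hy) => //.
exact: nonnegvZ (ltW r0) hx.
Qed.

Lemma ray_slope_gt_near {x a} : nonnegv x -> a < ray_slope x ->
  \forall y \near x, nonnegv y -> a < ray_slope y.
Proof.
move=> hx /(exists_lt1_mul (ray_slope_ge0 hx))[r r01 ar].
apply: filterS (ray_slope_scale_le_near hx r01) => y le_r hy.
exact: lt_le_trans ar (le_r hy).
Qed.

Lemma ratio_ge_near x r (h : nat -> R) (xs : nat -> 'rV[R]_N) :
  nonnegv x -> 0 < r < 1 -> h @ \oo --> +oo -> xs @ \oo --> x ->
  \forall n \near \oo, ((r * ray_slope x)%:E <= f (h n *: xs n) * ((h n)^-1)%:E)%E.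
Proof.
move=> hx r01 /cvgryPgt/(_ 0) h_gt0 /(_ _ (ray_slope_scale_le_near hx r01)) xs_near.
near=> n; have hn : 0 < h n by near: n; apply: h_gt0.
have le_r : nonnegv (xs n) -> r * ray_slope x <= ray_slope (xs n).
  by near: n; apply: xs_near.
have [xn|nxn] := pselect (nonnegv (xs n)); last by rewrite ratio_not_nonnegv ?leey.
by rewrite ratioE // lee_fin (le_trans (le_r xn) (ray_slope_le xn hn)).
Unshelve. all: by end_near.
Qed.

Lemma asymptotic_fun_orthant x : nonnegv x -> asymptotic_fun f x = (ray_slope x)%:E.
Proof.
move=> hx; apply/eqP; rewrite eq_le; apply/andP; split.
  apply: ereal_inf_lbound; exists (fun n => n%:R), (fun=> x); split.
  - exact: cvgr_idn.
  - exact: cvg_cst.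
  - by rewrite (cvg_limn_einf_sup (cvg_comp _ _ cvgr_idn (cvg_ray_ratio hx))).
apply: le_ereal_inf_tmp => _ [h [xs [h_oo xs_x ->]]].
apply/lee_mul01Pr; first by rewrite lee_fin ray_slope_ge0.
by move=> r r01; apply: limn_einf_ge_near; rewrite -EFinM; apply: ratio_ge_near.
Qed.

Lemma asymptotic_fun_not_nonnegv x : ~ nonnegv x -> asymptotic_fun f x = +oo%E.
Proof.
move=> nx; apply/eqP; rewrite eq_le leey /=.
apply: le_ereal_inf_tmp => _ [h [xs [/cvgryPgt/(_ 0) h_gt0 /(_ _ (near_not_nonnegv nx)) xs_out ->]]].
apply: limn_einf_ge_near; near=> n.
by rewrite ratio_not_nonnegv //; near: n; [apply: xs_out | apply: h_gt0].
Unshelve. all: by end_near.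
Qed.

Lemma asymptotic_fun_lsc : lower_semicontinuous (asymptotic_fun f).
Proof.
move=> x a; have [hx|nx] := pselect (nonnegv x).
  rewrite asymptotic_fun_orthant // lte_fin => /(ray_slope_gt_near hx) a_lt.
  exists [set y | nonnegv y -> a < ray_slope y] => // y /= a_lt_y.
  have [hy|ny] := pselect (nonnegv y); last by rewrite asymptotic_fun_not_nonnegv ?ltey.
  by rewrite asymptotic_fun_orthant // lte_fin a_lt_y.
move=> _; exists [set y | ~ nonnegv y]; first exact: near_not_nonnegv.
by move=> y /= ny; rewrite asymptotic_fun_not_nonnegv ?ltey.
Qed.

Lemma asymptotic_fun_homogeneous : pos_homogeneous (asymptotic_fun f).
Proof.
move=> x c c0; have [hx|nx] := pselect (nonnegv x).
  rewrite !asymptotic_fun_orthant ?ray_slopeZ ?EFinM //.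
  exact: nonnegvZ (ltW c0) hx.
rewrite !asymptotic_fun_not_nonnegv ?gt0_muley ?lte_fin //.
exact: not_nonnegvZ c0 nx.
Qed.

Lemma asymptotic_fun_concave :
  concave_on_orthant f -> concave_on_orthant (asymptotic_fun f).
Proof.
move=> f_concave x y hx hy t t01; have /andP[t0 t1] := t01.
set z := t *: x + (1 - t) *: y.
have hz : nonnegv z by move=> i; rewrite !mxE addr_ge0 // mulr_ge0 // subr_ge0.
rewrite !asymptotic_fun_orthant // -!EFinM -EFinD lee_fin.
apply/ler_addgt0Pr => e e0; have [H H0 /(_ H (lexx H)) Hz] := ray_slope_approx hz e0.
have hHx := nonnegvZ (ltW H0) hx; have hHy := nonnegvZ (ltW H0) hy.
have := f_concave _ _ hHx hHy _ t01.
have -> : t *: (H *: x) + (1 - t) *: (H *: y) = H *: z.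
  by rewrite /z scalerDr !scalerA (mulrC t) (mulrC (1 - t)).
rewrite !fE //; last exact: nonnegvZ (ltW H0) hz.
rewrite -!EFinM -EFinD lee_fin => f_cvx.
apply: ltW (le_lt_trans _ Hz).
apply: (@le_trans _ _ (t * (fr (H *: x) / H) + (1 - t) * (fr (H *: y) / H))).
  by apply: lerD; apply: ler_wpM2l; rewrite ?subr_ge0 // ray_slope_le.
by rewrite !mulrA -mulrDl ler_pM2r ?invr_gt0.
Qed.

Section ContinuousOnOrthant.
Hypothesis f_cont : {within @orthant R N, continuous f}.

Lemma fr_ratio_lt_near {x H c} : nonnegv x -> 0 < H -> fr (H *: x) / H < c ->
  \forall y \near x, nonnegv y -> fr (H *: y) / H < c.
Proof.
move=> hx H0; rewrite ltr_pdivrMr // => Hx_lt.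
have hHx := nonnegvZ (ltW H0) hx.
have /fine_cvgP[_ fr_cvg] : f @ within (@orthant R N) (nbhs (H *: x)) --> (fr (H *: x))%:E.
  by rewrite -fE //; move/subspace_continuousP : f_cont; apply.
have near_Hx := @scaler_continuous R _ H x _ (fr_cvg _ (lt_nbhsl Hx_lt)).
near=> y => hy; rewrite ltr_pdivrMr //.
have : orthant (H *: y) -> fr (H *: y) < c * H by near: y; apply: near_Hx.
by apply; apply: nonnegvZ (ltW H0) hy.
Unshelve. all: by end_near.
Qed.

Lemma ray_ratio_sandwich_near {x e} : nonnegv x -> 0 < e ->
  exists2 H, 0 < H & \forall y \near x, nonnegv y -> forall h, H <= h ->
    ray_slope x - e < ray_slope y /\ fr (h *: y) / h < ray_slope x + e.
Proof.
move=> hx e0; have [H H0 /(_ H (lexx H))/(fr_ratio_lt_near hx H0) ratio_lt] :=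
  ray_slope_approx hx e0.
have /(ray_slope_gt_near hx) slope_gt : ray_slope x - e < ray_slope x.
  by rewrite ltrBlDr ltrDl.
exists H => //; near=> y.
have lo : nonnegv y -> ray_slope x - e < ray_slope y by near: y.
have up : nonnegv y -> fr (H *: y) / H < ray_slope x + e by near: y.
move=> hy h Hh; split; first exact: lo.
exact: le_lt_trans (fr_ratio_nonincreasing hy H0 Hh) (up hy).
Unshelve. all: by end_near.
Qed.

Lemma asymptotic_fun_continuous :
  {within @orthant R N, continuous (asymptotic_fun f)}.
Proof.
apply/subspace_continuousP => x hx; rewrite /from_subspace /= asymptotic_fun_orthant //.
apply/fine_cvgP; split.
  by rewrite near_withinE; near=> y => hy; rewrite asymptotic_fun_orthant.
apply/cvgrPdist_lt => e e0; have [H H0 bounds] := ray_ratio_sandwich_near hx e0.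
rewrite near_withinE; move: bounds; apply: filterS => y bounds hy.
have [lo up] := bounds hy H (lexx H).
have := ray_slope_le hy H0; rewrite /= asymptotic_fun_orthant //= ltr_distl.
by move=> ?; apply/andP; split; lra.
Unshelve. all: by end_near.
Qed.

Lemma cvg_asymptotic_fun x (xs : nat -> 'rV[R]_N) (h : nat -> R) :
  nonnegv x -> (forall n, nonnegv (xs n)) -> (forall n, 0 < h n) ->
  xs @ \oo --> x -> h @ \oo --> +oo ->
  (fun n => f (h n *: xs n) * ((h n)^-1)%:E)%E @ \oo --> asymptotic_fun f x.
Proof.
move=> hx hxs h_gt0 xs_x /cvgryPge h_oo; rewrite asymptotic_fun_orthant //.
apply/fine_cvgP; split; first by apply: nearW => n; rewrite ratioE.
apply/cvgrPdist_lt => e e0; have [H H0 bounds] := ray_ratio_sandwich_near hx e0.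
have xs_bounds : \forall n \near \oo, nonnegv (xs n) -> forall hh, H <= hh ->
    ray_slope x - e < ray_slope (xs n) /\ fr (hh *: xs n) / hh < ray_slope x + e.
  exact: xs_x _ bounds.
move: xs_bounds (h_oo H); apply: filterS2 => n /(_ (hxs n) (h n)) bounds_n.
move=> /bounds_n[lo up]; have := ray_slope_le (hxs n) (h_gt0 n).
by rewrite /= ratioE //= ltr_distl => ?; apply/andP; split; lra.
Qed.

End ContinuousOnOrthant.
End StandardInterference.

Theorem proposition1 (R : realType) (N : nat) (f : 'rV[R]_N -> \bar R) :
  standard_interference f ->
  let finf := asymptotic_fun f in
  (* (i) *)
  (forall x, nonnegv x -> exists l : R, [/\ 0 <= l, finf x = l%:E &
      (fun h : R => (f (h *: x) * (h^-1)%:E)%E) @ +oo --> l%:E]) /\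
  (* (ii) *)
  (lower_semicontinuous finf /\ pos_homogeneous finf /\
   ({within @orthant R N, continuous f} ->
      {within @orthant R N, continuous finf})) /\
  (* (iii) *)
  (forall x1 x2, nonnegv x1 -> nonnegv x2 -> vle x2 x1 ->
      (finf x2 <= finf x1)%E) /\
  (* (iv) *)
  ({within @orthant R N, continuous f} ->
    forall x, nonnegv x ->
    forall (xs : nat -> 'rV[R]_N) (h : nat -> R),
      (forall n, nonnegv (xs n)) -> (forall n, 0 < h n) ->
      xs @ \oo --> x -> h @ \oo --> +oo ->
      (fun n => (f (h n *: xs n) * ((h n)^-1)%:E)%E) @ \oo --> finf x) /\
  (* (v) *)
  (concave_on_orthant f -> concave_on_orthant finf).
Proof.
move=> f_si finf; rewrite /finf; split; [|split; [|split; [|split]]].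
- move=> x hx; exists (ray_slope f x).
  by split; rewrite ?ray_slope_ge0 ?asymptotic_fun_orthant //; apply: cvg_ray_ratio.
- split; first exact: asymptotic_fun_lsc.
  split; first exact: asymptotic_fun_homogeneous.
  exact: asymptotic_fun_continuous.
- move=> x1 x2 h1 h2 le21.
  by rewrite !asymptotic_fun_orthant // lee_fin ray_slope_le_vle.
- by move=> f_cont x hx xs h; apply: cvg_asymptotic_fun.
- exact: asymptotic_fun_concave.
Qed.
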